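(* Let $A\neq 1$ and $B\neq 0$ be real constants and consider $$x_{n+10}=\frac{x_n}{A+B\,x_nx_{n+2}x_{n+4}x_{n+6}x_{n+8}}.$$ The equilibrium point $\bar x=0$ is locally asymptotically stable when $|A|>1$. Moreover, for every $A\neq 1$, the nonzero equilibrium points (the real solutions of $A+B\bar x^5-1=0$) are non-hyperbolic.
   Context: An equilibrium $\bar x$ of $x_{n+10}=f(x_n,x_{n+2},\dots,x_{n+8})$ is hyperbolic if no root of the characteristic equation of the linearization of the equation at $\bar x$ has modulus $1$; otherwise it is non-hyperbolic. Local asymptotic stability refers to the standard notion for the equilibrium of this tenth-order recurrence. *)

From Stdlib Require Import Reals.
From Coquelicot Require Import Coquelicot.
Open Scope R_scope.

Definition F (A B : R) (u0 u1 u2 u3 u4 : R) : R :=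
  u0 / (A + B * u0 * u1 * u2 * u3 * u4).

(* A solution of the tenth-order recurrence x_{n+10} = f(x_n,x_{n+2},...,x_{n+8}),
   indexed from 0 (x_0,...,x_9 are the initial conditions). *)
Definition is_solution (f : R -> R -> R -> R -> R -> R) (x : nat -> R) : Prop :=
  forall n : nat, x (n + 10)%nat = f (x n) (x (n + 2)%nat) (x (n + 4)%nat)
                                     (x (n + 6)%nat) (x (n + 8)%nat).

Definition is_equilibrium (f : R -> R -> R -> R -> R -> R) (xb : R) : Prop :=
  f xb xb xb xb xb = xb.

Definition locally_stable (f : R -> R -> R -> R -> R -> R) (xb : R) : Prop :=
  forall eps : R, 0 < eps -> exists delta : R, 0 < delta /\
    forall x : nat -> R, is_solution f x ->
      (forall i : nat, (i < 10)%nat -> Rabs (x i - xb) < delta) ->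
      forall n : nat, Rabs (x n - xb) < eps.

Definition locally_attracting (f : R -> R -> R -> R -> R -> R) (xb : R) : Prop :=
  exists gamma : R, 0 < gamma /\
    forall x : nat -> R, is_solution f x ->
      (forall i : nat, (i < 10)%nat -> Rabs (x i - xb) < gamma) ->
      is_lim_seq x xb.

Definition locally_asymptotically_stable (f : R -> R -> R -> R -> R -> R) (xb : R) : Prop :=
  is_equilibrium f xb /\ locally_stable f xb /\ locally_attracting f xb.

Definition p0 f xb := Derive (fun t => f t xb xb xb xb) xb.
Definition p1 f xb := Derive (fun t => f xb t xb xb xb) xb.
Definition p2 f xb := Derive (fun t => f xb xb t xb xb) xb.
Definition p3 f xb := Derive (fun t => f xb xb xb t xb) xb.
Definition p4 f xb := Derive (fun t => f xb xb xb xb t) xb.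

Fixpoint Cpow (z : C) (n : nat) : C :=
  match n with O => 1%C | S m => (z * Cpow z m)%C end.

(* Linearization at xb: y_{n+10} = p0 y_n + p1 y_{n+2} + ... + p4 y_{n+8};
   characteristic polynomial lambda^10 - (p0 + p1 lambda^2 + ... + p4 lambda^8). *)
Definition char_poly (f : R -> R -> R -> R -> R -> R) (xb : R) (l : C) : C :=
  (Cpow l 10 - (RtoC (p0 f xb) + RtoC (p1 f xb) * Cpow l 2 + RtoC (p2 f xb) * Cpow l 4
                + RtoC (p3 f xb) * Cpow l 6 + RtoC (p4 f xb) * Cpow l 8))%C.

Definition hyperbolic (f : R -> R -> R -> R -> R -> R) (xb : R) : Prop :=
  forall l : C, char_poly f xb l = 0%C -> Cmod l <> 1.

Definition non_hyperbolic (f : R -> R -> R -> R -> R -> R) (xb : R) : Prop :=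
  ~ hyperbolic f xb.

(* Near 0 the denominator of F stays close to A, so for |A| > 1 every tenth
   step contracts: |x_(n+10)| <= |x_n| / c with some c > 1, once all terms are
   small; since the contraction also keeps the terms small, they decay
   geometrically.  At an equilibrium with A + B xb^5 = 1 the partial
   derivatives are A, A - 1, A - 1, A - 1, A - 1, and the characteristic
   polynomial factors as (l^2 - A)(1 + l^2 + l^4 + l^6 + l^8); the second
   factor vanishes at l = exp(i pi/5), whose square is a primitive fifth root
   of unity. *)
From Stdlib Require Import Reals Lra Lia.
From Coquelicot Require Import Coquelicot.
Open Scope R_scope.

Lemma contraction_constants (A B : R) : Rabs A > 1 ->
  exists c d, 1 < c /\ 0 < d /\ d <= 1 /\ Rabs B * d <= Rabs A - c.
Proof.
  intros HA.
  pose proof (Rabs_pos B) as HB.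
  exists ((Rabs A + 1) / 2), (Rmin 1 ((Rabs A - 1) / (2 * (Rabs B + 1)))).
  set (d := Rmin _ _).
  assert (Hd_r : d * (2 * (Rabs B + 1)) <= Rabs A - 1).
  { apply (Rmult_le_reg_r (/ (2 * (Rabs B + 1)))).
    - apply Rinv_0_lt_compat; lra.
    - rewrite Rmult_assoc, Rinv_r by lra. rewrite Rmult_1_r. apply Rmin_r. }
  repeat split; try lra.
  - apply Rmin_glb_lt; [lra|]. apply Rdiv_lt_0_compat; lra.
  - apply Rmin_l.
  - assert (0 <= d).
    { apply Rmin_glb; [lra|]. apply Rdiv_le_0_compat; lra. }
    nra.
Qed.

Section Contraction.

Variables A B c d : R.
Hypotheses (d_le1 : d <= 1) (c_ge1 : 1 <= c)
  (denom_bound : Rabs B * d <= Rabs A - c).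

Lemma Rabs_F_le (u0 u1 u2 u3 u4 : R) :
  Rabs u0 <= d -> Rabs u1 <= d -> Rabs u2 <= d -> Rabs u3 <= d -> Rabs u4 <= d ->
  Rabs (F A B u0 u1 u2 u3 u4) <= Rabs u0 / c.
Proof.
  intros H0 H1 H2 H3 H4.
  assert (Hprod : Rabs (B * u0 * u1 * u2 * u3 * u4) <= Rabs B * d).
  { rewrite !Rabs_mult.
    pose proof (Rabs_pos B). pose proof (Rabs_pos u0). pose proof (Rabs_pos u1).
    pose proof (Rabs_pos u2). pose proof (Rabs_pos u3). pose proof (Rabs_pos u4).
    assert (Rabs u0 * Rabs u1 <= 1) by nra.
    assert (Rabs u0 * Rabs u1 * Rabs u2 <= 1) by nra.
    assert (Rabs u0 * Rabs u1 * Rabs u2 * Rabs u3 <= 1) by nra.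
    assert (Rabs u0 * Rabs u1 * Rabs u2 * Rabs u3 * Rabs u4 <= d) by nra.
    nra. }
  assert (Hdenom : c <= Rabs (A + B * u0 * u1 * u2 * u3 * u4)).
  { pose proof (Rabs_triang_inv A (- (B * u0 * u1 * u2 * u3 * u4))) as Htri.
    rewrite Rabs_Ropp in Htri.
    replace (A - - (B * u0 * u1 * u2 * u3 * u4)) with (A + B * u0 * u1 * u2 * u3 * u4)
      in Htri by ring.
    lra. }
  unfold F, Rdiv. rewrite Rabs_mult, Rabs_inv.
  apply Rmult_le_compat_l; [apply Rabs_pos|].
  apply Rinv_le_contravar; lra.
Qed.

Variable x : nat -> R.
Hypothesis x_solution : is_solution (F A B) x.

Lemma solution_bounded (d' : R) : d' <= d ->
  (forall i, (i < 10)%nat -> Rabs (x i) < d') -> forall n, Rabs (x n) < d'.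
Proof.
  intros Hd' Hinit n.
  induction n as [n IH] using (well_founded_induction Wf_nat.lt_wf).
  destruct (Nat.lt_ge_cases n 10) as [Hn | Hn]; [now apply Hinit|].
  assert (Hprev : forall j, (j < n)%nat -> Rabs (x j) <= d).
  { intros j Hj. apply Rlt_le, (Rlt_le_trans _ d'); [apply IH, Hj | exact Hd']. }
  assert (Hshrink : Rabs (x (n - 10)) / c <= Rabs (x (n - 10))).
  { apply Rle_div_l; [lra|]. pose proof (Rabs_pos (x (n - 10))). nra. }
  replace n with ((n - 10) + 10)%nat by lia. rewrite x_solution.
  eapply Rle_lt_trans; [apply Rabs_F_le; apply Hprev; lia|].
  eapply Rle_lt_trans; [exact Hshrink | apply IH; lia].
Qed.

Hypothesis x_init : forall i, (i < 10)%nat -> Rabs (x i) < d.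

Lemma solution_step (n : nat) : Rabs (x (n + 10)) <= Rabs (x n) / c.
Proof.
  pose proof (solution_bounded d (Rle_refl d) x_init) as Hb.
  rewrite x_solution. apply Rabs_F_le; apply Rlt_le, Hb.
Qed.

Lemma solution_decay (k n : nat) : (10 * k <= n)%nat -> Rabs (x n) <= d * (/ c) ^ k.
Proof.
  revert n. induction k as [|k IH]; intros n Hn.
  - rewrite pow_O, Rmult_1_r. apply Rlt_le, (solution_bounded d (Rle_refl d) x_init).
  - replace n with ((n - 10) + 10)%nat by lia.
    eapply Rle_trans; [apply solution_step|].
    replace (d * (/ c) ^ S k) with (d * (/ c) ^ k / c) by (simpl; field; lra).
    apply Rmult_le_compat_r; [apply Rlt_le, Rinv_0_lt_compat; lra|].
    apply IH. lia.
Qed.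

End Contraction.

Lemma F_zero_locally_stable (A B : R) : Rabs A > 1 -> locally_stable (F A B) 0.
Proof.
  intros HA eps Heps.
  destruct (contraction_constants A B HA) as (c & d & Hc & Hd & Hd1 & Hdenom).
  exists (Rmin eps d). split; [apply Rmin_glb_lt; lra|].
  intros x Hsol Hinit n. rewrite Rminus_0_r.
  apply (Rlt_le_trans _ (Rmin eps d)); [|apply Rmin_l].
  apply (solution_bounded A B c d Hd1 (Rlt_le _ _ Hc) Hdenom x Hsol); [apply Rmin_r|].
  intros i Hi. rewrite <- (Rminus_0_r (x i)). now apply Hinit.
Qed.

Lemma F_zero_locally_attracting (A B : R) : Rabs A > 1 -> locally_attracting (F A B) 0.
Proof.
  intros HA.
  destruct (contraction_constants A B HA) as (c & d & Hc & Hd & Hd1 & Hdenom).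
  exists d. split; [exact Hd|]. intros x Hsol Hinit.
  assert (Hinit0 : forall i, (i < 10)%nat -> Rabs (x i) < d).
  { intros i Hi. rewrite <- (Rminus_0_r (x i)). now apply Hinit. }
  apply is_lim_seq_Reals. intros eps Heps.
  assert (Hq : Rabs (/ c) < 1).
  { rewrite Rabs_pos_eq by (apply Rlt_le, Rinv_0_lt_compat; lra).
    rewrite <- Rinv_1. apply Rinv_lt_contravar; lra. }
  destruct (pow_lt_1_zero (/ c) Hq (eps / d)) as [K HK].
  { apply Rdiv_lt_0_compat; lra. }
  exists (10 * K)%nat. intros n Hn. unfold R_dist. rewrite Rminus_0_r.
  eapply Rle_lt_trans.
  { apply (solution_decay A B c d Hd1 (Rlt_le _ _ Hc) Hdenom x Hsol Hinit0 K n Hn). }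
  specialize (HK K (le_n K)).
  rewrite Rabs_pos_eq in HK by (apply pow_le, Rlt_le, Rinv_0_lt_compat; lra).
  apply (Rmult_lt_compat_l d) in HK; [|exact Hd].
  replace (d * (eps / d)) with eps in HK by (field; lra). exact HK.
Qed.

Lemma F_partials_at_equilibrium (A B xb : R) : A + B * xb ^ 5 = 1 ->
  p0 (F A B) xb = A /\ p1 (F A B) xb = A - 1 /\ p2 (F A B) xb = A - 1 /\
  p3 (F A B) xb = A - 1 /\ p4 (F A B) xb = A - 1.
Proof.
  intros Heq.
  assert (Hden : A + B * xb * xb * xb * xb * xb = 1) by (rewrite <- Heq; ring).
  repeat split; unfold p0, p1, p2, p3, p4, F; apply is_derive_unique;
    auto_derive; rewrite Hden; try lra; rewrite <- Heq; field.
Qed.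

Lemma char_poly_factor (f : R -> R -> R -> R -> R -> R) (xb a : R) (l : C) :
  p0 f xb = a -> p1 f xb = a - 1 -> p2 f xb = a - 1 ->
  p3 f xb = a - 1 -> p4 f xb = a - 1 ->
  char_poly f xb l =
    ((Cpow l 2 - a) * (1 + Cpow l 2 + Cpow l 4 + Cpow l 6 + Cpow l 8))%C.
Proof.
  intros E0 E1 E2 E3 E4.
  unfold char_poly. rewrite E0, E1, E2, E3, E4, RtoC_minus. simpl. ring.
Qed.

Lemma even_geometric_sum_eq0 (l : C) : Cpow l 10 = 1%C -> Cpow l 2 <> 1%C ->
  (1 + Cpow l 2 + Cpow l 4 + Cpow l 6 + Cpow l 8)%C = 0%C.
Proof.
  intros H10 H2.
  set (S := (1 + Cpow l 2 + Cpow l 4 + Cpow l 6 + Cpow l 8)%C).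
  assert (Htelescope : ((Cpow l 2 - 1) * S)%C = (Cpow l 10 - 1)%C)
    by (unfold S; simpl; ring).
  destruct (Ceq_dec S 0) as [HS | HS]; [exact HS|]. exfalso.
  apply (Cmult_neq_0 (Cpow l 2 - 1) S); [|exact HS|].
  - intros E. apply H2. rewrite <- (Cplus_0_l 1), <- E. ring.
  - rewrite Htelescope, H10. ring.
Qed.

Lemma Cpow_cis (t : R) (n : nat) :
  Cpow (cos t, sin t) n = (cos (INR n * t), sin (INR n * t)).
Proof.
  induction n as [|n IH].
  - simpl. rewrite Rmult_0_l, cos_0, sin_0. reflexivity.
  - change (Cpow (cos t, sin t) (S n)) with ((cos t, sin t) * Cpow (cos t, sin t) n)%C.
    rewrite IH, S_INR, Rmult_plus_distr_r, Rmult_1_l, Rplus_comm, cos_plus, sin_plus.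
    unfold Cmult. simpl. f_equal; ring.
Qed.

Lemma Cmod_cis (t : R) : Cmod (cos t, sin t) = 1.
Proof.
  unfold Cmod. simpl. rewrite !Rmult_1_r, <- sqrt_1. f_equal.
  pose proof (sin2_cos2 t). unfold Rsqr in *. lra.
Qed.

Lemma F_equilibrium_non_hyperbolic (A B xb : R) : A + B * xb ^ 5 = 1 ->
  non_hyperbolic (F A B) xb.
Proof.
  intros Heq Hhyp.
  destruct (F_partials_at_equilibrium A B xb Heq) as (E0 & E1 & E2 & E3 & E4).
  apply (Hhyp (cos (PI / 5), sin (PI / 5))); [|apply Cmod_cis].
  rewrite (char_poly_factor _ _ A _ E0 E1 E2 E3 E4), even_geometric_sum_eq0.
  - apply Cmult_0_r.
  - rewrite Cpow_cis. replace (INR 10 * (PI / 5)) with (2 * PI) by (simpl; field).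
    rewrite cos_2PI, sin_2PI. reflexivity.
  - rewrite Cpow_cis. replace (INR 2 * (PI / 5)) with (2 * PI / 5) by (simpl; field).
    intros E. injection E as _ Esin.
    assert (0 < sin (2 * PI / 5)) by (apply sin_gt_0; pose proof PI_RGT_0; lra).
    lra.
Qed.

Theorem theorem6 (A B : R) (hA : A <> 1) (hB : B <> 0) :
  (Rabs A > 1 -> locally_asymptotically_stable (F A B) 0) /\
  (forall xb : R, xb <> 0 -> A + B * xb ^ 5 - 1 = 0 ->
     non_hyperbolic (F A B) xb).
Proof.
  split.
  - intros HA. split; [|split].
    + unfold is_equilibrium, F, Rdiv. apply Rmult_0_l.
    + now apply F_zero_locally_stable.
    + now apply F_zero_locally_attracting.
  - intros xb _ Heq. apply F_equilibrium_non_hyperbolic. lra.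
Qed.
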